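(* Let $G$ be a finite primitive monolithic soluble group. If $G$ is weakly minmax, then the derived length of $G$ is at most $3$.
   Context: A finite group is primitive if it has a core-free maximal subgroup, and monolithic if it has a unique minimal normal subgroup. A subgroup of $G$ is a maximal intersection if it is an intersection of finitely many (at least one) maximal subgroups of $G$; $\mathcal M(G)$ is the poset under inclusion consisting of $G$ and all maximal intersections in $G$. An unrefinable chain in $\mathcal M(G)$ is a chain $K_t<\dots<K_0$ of elements of $\mathcal M(G)$ to which no further element of $\mathcal M(G)$ can be added; its length is $t$. $\mathrm{MinInt}(G)$ and $\mathrm{MaxInt}(G)$ are the minimal and maximal lengths of unrefinable chains in $\mathcal M(G)$. $\alpha(G)$ is the smallest cardinality of a family of maximal subgroups of $G$ whose intersection equals the Frattini subgroup $\Phi(G)$. $G$ is weakly minmax if $\mathrm{MinInt}(G)=\mathrm{MaxInt}(G)=\alpha(G)$. *)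

From mathcomp Require Import all_boot all_fingroup all_solvable.
Set Implicit Arguments. Unset Strict Implicit. Unset Printing Implicit Defensive.
Local Open Scope group_scope.

Section Defs.
Variable gT : finGroupType.
Implicit Types G H : {set gT}.

Definition primitive_group (G : {group gT}) : bool :=
  [exists M : {group gT}, maximal M G && (gcore M G == 1)].

Definition min_normal (N G : {group gT}) : bool := minnormal N G && (N \subset G).

Definition monolithic (G : {group gT}) : Prop :=
  exists N : {group gT}, min_normal N G /\
    forall N' : {group gT}, min_normal N' G -> N' = N.

Definition max_intersection (G : {group gT}) H : bool :=
  [exists F : {set {group gT}},
     [&& F != set0, [forall M in F, maximal M G] & H == \bigcap_(M in F) (M : {set gT})]].

Definition MI (G : {group gT}) : {set {set gT}} :=
  [set H : {set gT} | (H == G) || max_intersection G H].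

Definition MI_chain (G : {group gT}) (C : {set {set gT}}) : bool :=
  (C \subset MI G) &&
  [forall H in C, forall K in C, (H \subset K) || (K \subset H)].

Definition unrefinable_chain (G : {group gT}) (C : {set {set gT}}) : bool :=
  MI_chain G C &&
  [forall H in MI G, (H \notin C) ==> ~~ MI_chain G (H |: C)].

Definition chain_length (C : {set {set gT}}) : nat := (#|C|).-1.

(* MinInt(G): minimal length of an unrefinable chain (the default #|MI G| exceeds
   every chain length, and unrefinable chains always exist). *)
Definition MinInt (G : {group gT}) : nat :=
  \big[minn/#|MI G|]_(C : {set {set gT}} | unrefinable_chain G C) chain_length C.

Definition MaxInt (G : {group gT}) : nat :=
  \max_(C : {set {set gT}} | unrefinable_chain G C) chain_length C.

(* alpha(G): least cardinality of a family of maximal subgroups of G whose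
   intersection is the Frattini subgroup (the empty family's intersection is
   taken to be G; the default #|gT|.+1 is never reached since the family of
   all maximal subgroups works). *)
Definition alpha (G : {group gT}) : nat :=
  \big[minn/#|{group gT}|.+1]_(F : {set {group gT}} |
       [forall M in F, maximal M G] && (G :&: \bigcap_(M in F) (M : {set gT}) == 'Phi(G)))
    #|F|.

Definition weakly_minmax (G : {group gT}) : Prop :=
  MinInt G = MaxInt G /\ MaxInt G = alpha G.

End Defs.

(* Let M be a core-free maximal subgroup of G and N a minimal normal subgroup,
   elementary abelian since G is soluble; then G = N M, N :&: M = 1 and
   C_M(N) = 1.  Walking down an unrefinable chain of maximal intersections,
   every step is an intersection with one more maximal subgroup until Phi(G)
   is reached, so alpha(G) <= k + (number of chain members below X) whenever X
   is an intersection of k maximal subgroups.  Hence MaxInt(G) = alpha(G)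
   leaves no maximal intersection strictly between a maximal subgroup M and
   M :&: M2 with M2 maximal.  For 1 <> w in N we have M :&: M^(w^-1) = C_M(w),
   and every maximal subgroup K of M is the maximal intersection M :&: N K; so
   each C_M(w) is maximal in M.  A minimal normal subgroup F of M therefore
   complements every C_M(w), acts faithfully and irreducibly on some subgroup
   of N (so is cyclic) and is self-centralizing in M.  Thus M' <= F, M'' = 1,
   G'' <= N and G''' = 1. *)

From mathcomp Require Import all_boot all_fingroup all_solvable.
From mathcomp Require Import zmodp mxrepresentation mxabelem.
From mathcomp Require Import order.
Set Implicit Arguments. Unset Strict Implicit. Unset Printing Implicit Defensive.
Local Open Scope group_scope.

Lemma mulg_norm_maximal (gT : finGroupType) (A D H : {group gT}) :
  maximal D H -> A \subset H -> D \subset 'N(A) -> ~~ (A \subset D) -> A * D = H.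
Proof.
case/maxgroupP=> /andP[sDH _] maxD sAH nAD notsAD.
apply/eqP; rewrite eqEproper mul_subG // -norm_joinEr //.
by apply: contra notsAD => /maxD <-; rewrite ?joing_subl ?joing_subr.
Qed.

Lemma abelian_faithful_irr_cyclic (gT : finGroupType) p (E A : {group gT}) :
  p.-abelem E -> E :!=: 1 -> A \subset 'N(E) -> minnormal E A -> 'C_A(E) = 1 ->
  abelian A -> cyclic A.
Proof.
move=> abelE ntE nEA minE cAE1 abA.
apply: (mx_faithful_irr_abelian_cyclic (abelem_mx_faithful abelE ntE nEA cAE1)) => //.
exact/abelem_mx_irrP.
Qed.

Lemma der1_norm_cyclic_cent (gT : finGroupType) (F M : {group gT}) :
  cyclic F -> M \subset 'N(F) -> M^`(1) \subset 'C(F).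
Proof.
move=> cycF nFM; rewrite -ker_conj_aut ker_trivg_morphim (subset_trans (der_sub 1 M)) //=.
rewrite morphim_der // (derG1P _) //.
exact: abelianS (Aut_conj_aut F M) (Aut_cyclic_abelian cycF).
Qed.

Section MaximalIntersections.
Variables (gT : finGroupType) (G : {group gT}).
Implicit Types (H K X Y Z : {set gT}) (C : {set {set gT}}).
Implicit Types (M : {group gT}) (F : {set {group gT}}).

Lemma MI_bigcap F : F != set0 -> {in F, forall M, maximal M G} ->
  \bigcap_(M in F) (M : {set gT}) \in MI G.
Proof.
move=> ntF maxF; rewrite inE; apply/orP; right; apply/existsP; exists F.
by rewrite ntF eqxx andbT; apply/forall_inP.
Qed.

Lemma MI_cases H : H \in MI G -> H = G \/ exists F,
  [/\ F != set0, {in F, forall M, maximal M G} & H = \bigcap_(M in F) (M : {set gT})].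
Proof.
rewrite inE => /orP[/eqP-> | /existsP[F /and3P[ntF /forall_inP maxF /eqP->]]].
  by left.
by right; exists F.
Qed.

Lemma maximal_MI M : maximal M G -> (M : {set gT}) \in MI G.
Proof.
move=> maxM; have := @MI_bigcap [set M]; rewrite big_set1; apply=> [|L /set1P-> //].
by apply/set0Pn; exists M; rewrite set11.
Qed.

Lemma Phi_MI : 'Phi(G) \in MI G.
Proof.
have [G1 | [M0 maxM0 _]] := maximal_exists (sub1G G).
  by rewrite inE -G1 (trivgP (Phi_sub 1)) eqxx.
have -> : 'Phi(G) = \bigcap_(M in [set M : {group gT} | maximal M G]) (M : {set gT}).
  apply/eqP; rewrite eqEsubset; apply/andP; split.
    by apply/bigcapsP=> M; rewrite inE; apply: Phi_sub_max.
  apply/bigcapsP=> M /orP[/eqP-> | maxM]; last by rewrite bigcap_inf ?inE.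
  by rewrite (bigcap_min M0) ?inE //; case/maxgroupp/andP: maxM0.
by apply: MI_bigcap => [|M]; rewrite ?inE //; apply/set0Pn; exists M0; rewrite inE.
Qed.

Lemma MI_sub H : H \in MI G -> H \subset G.
Proof.
case/MI_cases=> [-> // | [F [/set0Pn[M FM] maxF ->]]].
by rewrite (bigcap_min M) // proper_sub ?(maxgroupp (maxF M FM)).
Qed.

Lemma Phi_sub_MI H : H \in MI G -> 'Phi(G) \subset H.
Proof.
case/MI_cases=> [-> | [F [_ maxF ->]]]; first exact: Phi_sub.
by apply/bigcapsP=> M /maxF; apply: Phi_sub_max.
Qed.

Lemma MI_setI_maximal H M : H \in MI G -> maximal M G -> H :&: M \in MI G.
Proof.
case/MI_cases=> [-> | [F [_ maxF ->]]] maxM.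
  by rewrite (setIidPr (proper_sub (maxgroupp maxM))) maximal_MI.
have := @MI_bigcap (F :|: [set M]); rewrite bigcap_setU big_set1; apply.
  by apply/set0Pn; exists M; rewrite !inE eqxx orbT.
by move=> L /setUP[/maxF | /set1P->].
Qed.

Local Notation comparable H K := ((H \subset K) || (K \subset H)).
Local Notation above C X := [set Y in C | X \proper Y].
Local Notation below C X := [set Y in C | Y \proper X].

Lemma MI_chain_MI C H : MI_chain G C -> H \in C -> H \in MI G.
Proof. by case/andP=> /subsetP sCMI _; apply: sCMI. Qed.

Lemma MI_chain_comparable C H K :
  MI_chain G C -> H \in C -> K \in C -> comparable H K.
Proof. by case/andP=> _ /forall_inP cmpC CH /(forall_inP (cmpC H CH)). Qed.

Lemma MI_chain_setU1 C H : MI_chain G C -> H \in MI G ->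
  {in C, forall K, comparable H K} -> MI_chain G (H |: C).
Proof.
move=> chC MIH cmpH; apply/andP; split.
  by rewrite subUset sub1set MIH; case/andP: chC.
apply/forall_inP=> K /setU1P[-> | CK]; apply/forall_inP=> L /setU1P[-> | CL].
- by rewrite subxx.
- exact: cmpH.
- by rewrite orbC cmpH.
- exact: MI_chain_comparable chC CK CL.
Qed.

Lemma unrefinable_chain_mem C H : unrefinable_chain G C -> H \in MI G ->
  {in C, forall K, comparable H K} -> H \in C.
Proof.
case/andP=> chC /forall_inP/(_ H) unrefC MIH cmpH.
by apply: contraTT (MI_chain_setU1 chC MIH cmpH); apply/implyP/unrefC.
Qed.

Lemma MI_chain_extend C0 :
  MI_chain G C0 -> exists2 C, unrefinable_chain G C & C0 \subset C.
Proof.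
move=> chC0; have C0ext : MI_chain G C0 && (C0 \subset C0) by rewrite chC0 subxx.
have [C /andP[chC sC0C] maxC] :=
  arg_maxnP (P := fun C => MI_chain G C && (C0 \subset C)) (fun C => #|C|) C0ext.
exists C => //; apply/andP; split=> //; apply/forall_inP=> H _.
apply/implyP=> notCH; apply/negP=> chHC.
have := maxC (H |: C); rewrite chHC (subset_trans sC0C) ?subsetUr //.
by rewrite cardsU1 notCH add1n => /(_ isT) /=; rewrite ltnn.
Qed.

Lemma Phi_mem_unrefinable_chain C : unrefinable_chain G C -> 'Phi(G) \in C.
Proof.
move=> unrefC; have /andP[chC _] := unrefC.
by apply: unrefinable_chain_mem unrefC Phi_MI _ => K /(MI_chain_MI chC)/Phi_sub_MI->.
Qed.

(* If Y is the largest member of C below X, some maximal M >= Y misses X,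
   and X :&: M is comparable with every member of C. *)
Lemma unrefinable_chain_step C X : unrefinable_chain G C -> X \in C ->
  ~~ (X \subset 'Phi(G)) ->
  exists M, [/\ maximal M G, X :&: M \in C & X :&: M \proper X].
Proof.
move=> unrefC CX notXPhi; have chC : MI_chain G C by case/andP: unrefC.
have belowPhi : 'Phi(G) \in below C X.
  by rewrite inE Phi_mem_unrefinable_chain // properE Phi_sub_MI ?(MI_chain_MI chC CX).
have [Y belowY maxY] :=
  arg_maxnP (P := fun Y => Y \in below C X) (fun Y : {set gT} => #|Y|) belowPhi.
have /andP[CY pYX] : (Y \in C) && (Y \proper X) by rewrite inE in belowY.
have sbelowY Z : Z \in C -> Z \proper X -> Z \subset Y.
  move=> CZ pZX; case/orP: (MI_chain_comparable chC CZ CY) => // sYZ.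
  have /eqP <- // : Y == Z by rewrite eqEcard sYZ; apply: maxY; rewrite inE CZ.
have [defY | [F [_ maxF defY]]] := MI_cases (MI_chain_MI chC CY).
  by move: pYX; rewrite defY properE MI_sub ?andbF ?(MI_chain_MI chC CX).
have [M FM notXM] : exists2 M, M \in F & ~~ (X \subset M).
  apply/exists_inP; apply: contraLR (proper_subn pYX) => /exists_inPn sXF.
  by rewrite negbK defY; apply/bigcapsP=> M /sXF/negbNE.
have sYM : Y \subset M by rewrite defY (bigcap_inf M).
have pXMX : X :&: M \proper X by rewrite properE subsetIl subsetI subxx.
exists M; split=> //; first exact: maxF.
apply: unrefinable_chain_mem unrefC (MI_setI_maximal (MI_chain_MI chC CX) (maxF M FM)) _.
move=> Z CZ; case/orP: (MI_chain_comparable chC CX CZ) => [sXZ | sZX].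
  by rewrite (subset_trans (subsetIl X M) sXZ).
have [<- | neZX] := eqVneq Z X; first by rewrite subsetIl.
have pZX : Z \proper X by rewrite properEneq neZX.
have sZY := sbelowY Z CZ pZX.
by rewrite subsetI (subset_trans sZY sYM) (subset_trans sZY (proper_sub pYX)) orbT.
Qed.

Lemma card_below_proper C X Y :
  Y \in C -> Y \proper X -> #|below C Y| < #|below C X|.
Proof.
move=> CY pYX; apply: proper_card; apply/properP; split.
  by apply/subsetP=> Z; rewrite !inE => /andP[-> /proper_trans->].
by exists Y; rewrite !inE ?CY ?pYX ?properxx.
Qed.

Lemma card_above_below C X :
  X \in C -> #|above C X| + #|below C X| < #|C|.
Proof.
move=> CX; rewrite -(cardsID [set Y : {set gT} | X \proper Y] C) -setIdE ltn_add2l.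
have notbelowX : X \notin below C X by rewrite inE properxx andbF.
have -> : #|below C X|.+1 = #|X |: below C X| by rewrite cardsU1 notbelowX.
apply: subset_leq_card.
apply/subsetP=> Y; rewrite !inE => /predU1P[-> | /andP[-> pYX]]; first by rewrite CX properxx.
by rewrite (contra (@proper_sub _ _ _) (proper_subn pYX)).
Qed.

Lemma unrefinable_chain_cap_Phi C X : unrefinable_chain G C -> X \in C ->
  exists2 F : {set {group gT}}, {in F, forall M, maximal M G} &
    (#|F| <= #|below C X|) && (X :&: \bigcap_(M in F) (M : {set gT}) \subset 'Phi(G)).
Proof.
move=> unrefC; elim: {X}_.+1 {-2}X (ltnSn #|X|) => // n IHn X ltXn CX.
have [sXPhi | /(unrefinable_chain_step unrefC CX)[M [maxM CXM pXM]]] :=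
  boolP (X \subset 'Phi(G)).
  by exists set0 => [M|]; rewrite ?inE // cards0 big_set0 setIT sXPhi.
have [|F maxF /andP[leF sXMF]] := IHn (X :&: M) _ CXM.
  by apply: leq_trans (proper_card pXM) _; rewrite -ltnS.
exists (M |: F) => [L /setU1P[-> // | /maxF //] |].
rewrite bigcap_setU big_set1 setIA sXMF andbT cardsU1.
by rewrite (leq_trans (leq_add (leq_b1 _) leF)) ?add1n ?card_below_proper.
Qed.

Lemma alpha_le F : {in F, forall M, maximal M G} ->
  G :&: \bigcap_(M in F) (M : {set gT}) \subset 'Phi(G) -> alpha G <= #|F|.
Proof.
move=> maxF sFPhi.
(* [minn] is [Order.min] on [nat], so the order-theoretic bound applies. *)
apply: (@Order.TotalTheory.bigmin_le_cond _ nat); rewrite eqEsubset sFPhi.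
rewrite subsetI Phi_sub; apply/and3P; split=> //; first exact/forall_inP.
by apply/bigcapsP=> M /maxF; apply: Phi_sub_max.
Qed.

Lemma chain_length_le_MaxInt C :
  unrefinable_chain G C -> chain_length C <= MaxInt G.
Proof. exact: leq_bigmax_cond. Qed.

(* Extend C0 to an unrefinable chain C: alpha(G) <= #|F| + #|below C X| by
   unrefinable_chain_cap_Phi, while MaxInt(G) >= #|above C X| + #|below C X|. *)
Lemma MaxInt_alpha_card_above C0 F : MaxInt G = alpha G -> MI_chain G C0 ->
  {in F, forall M, maximal M G} -> \bigcap_(M in F) (M : {set gT}) \in C0 ->
  #|above C0 (\bigcap_(M in F) (M : {set gT}))| <= #|F|.
Proof.
set X := \bigcap_(M in F) _ => MaxInt_alpha chC0 maxF C0X.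
have [C unrefC sC0C] := MI_chain_extend chC0.
have CX : X \in C := subsetP sC0C X C0X.
have [F' maxF' /andP[leF' sXF'Phi]] := unrefinable_chain_cap_Phi unrefC CX.
have alpha_le_FF' : alpha G <= #|F :|: F'|.
  apply: alpha_le => [M /setUP[/maxF | /maxF'] // |].
  by rewrite bigcap_setU -/X subIset // sXF'Phi orbT.
have sabove : above C0 X \subset above C X.
  by apply/subsetP=> Y; rewrite !inE => /andP[/(subsetP sC0C)-> ->].
rewrite -(leq_add2r #|below C X|) (leq_trans (leq_add (subset_leq_card sabove) (leqnn _))) //.
apply: leq_trans (leq_add (leqnn #|F|) leF').
apply: leq_trans (leq_card_setU F F').1; apply: leq_trans alpha_le_FF'.
rewrite -MaxInt_alpha (leq_trans _ (chain_length_le_MaxInt unrefC)) //.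
by rewrite -ltnS (leq_trans (card_above_below CX)) // leqSpred.
Qed.

(* Otherwise G > M1 > K > M1 :&: M2 puts three chain members above an
   intersection of two maximal subgroups. *)
Lemma MaxInt_alpha_no_refinement (M1 M2 : {group gT}) K : MaxInt G = alpha G ->
  maximal M1 G -> maximal M2 G -> K \in MI G -> M1 :&: M2 \proper K -> K \proper M1 ->
  False.
Proof.
move=> MaxInt_alpha maxM1 maxM2 MIK pXK pKM1.
set X := M1 :&: M2 in pXK.
have defX : \bigcap_(M in [set M1; M2]) (M : {set gT}) = X by rewrite bigcap_setU !big_set1.
have pM1G := maxgroupp maxM1; have pKG := proper_trans pKM1 pM1G.
have [pXM1 pXG] := (proper_trans pXK pKM1, proper_trans pXK pKG).
pose C0 : {set {set gT}} := [set (G : {set gT}); (M1 : {set gT}); K; X].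
have chC0 : MI_chain G C0.
  apply/andP; split.
    by rewrite !subUset !sub1set inE eqxx maximal_MI ?MIK ?MI_setI_maximal ?maximal_MI.
  apply/forall_inP=> Y C0Y; apply/forall_inP=> Z C0Z.
  move: C0Y C0Z; rewrite !inE -!orbA => /or4P[] /eqP-> /or4P[] /eqP->;
    by rewrite ?subxx ?(proper_sub pXK, proper_sub pKM1, proper_sub pM1G,
                        proper_sub pXM1, proper_sub pXG, proper_sub pKG) ?orbT.
have maxM12 : {in [set M1; M2], forall M, maximal M G} by move=> M /set2P[]->.
have C0X : X \in C0 by rewrite !inE eqxx !orbT.
have := MaxInt_alpha_card_above MaxInt_alpha chC0 maxM12; rewrite defX => /(_ C0X).
have sGM1K : (G : {set gT}) |: [set (M1 : {set gT}); K] \subset above C0 X.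
  by apply/subsetP=> Y; rewrite !inE -!orbA => /or3P[] /eqP->; rewrite eqxx ?orbT.
have card_GM1K : #|(G : {set gT}) |: [set (M1 : {set gT}); K]| = 3.
  rewrite cardsU1 cards2 !inE negb_or.
  by rewrite eq_sym (proper_neq pM1G) eq_sym (proper_neq pKG) eq_sym (proper_neq pKM1).
have := subset_leq_card sGM1K; rewrite cards2 card_GM1K.
by move=> lt2_above /(leq_trans lt2_above); rewrite ltnS leqNgt ltnS leq_b1.
Qed.
End MaximalIntersections.

Section CoreFreeMaximal.
Variables (gT : finGroupType) (p : nat) (G M N : {group gT}).
Hypotheses (maxM : maximal M G) (coreM : gcore M G = 1).
Hypotheses (minN : minnormal N G) (sNG : N \subset G) (abelN : p.-abelem N).

Let sMG : M \subset G := proper_sub (maxgroupp maxM).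
Let nNG : G \subset 'N(N). Proof. by case/mingroupp/andP: minN. Qed.
Let ntN : N :!=: 1. Proof. by case/mingroupp/andP: minN. Qed.
Let abN : abelian N := abelem_abelian abelN.
Let nNM : M \subset 'N(N) := subset_trans sMG nNG.
Let sub_norm (A : {set gT}) : A \subset N -> N \subset 'N(A).
Proof. by move=> sAN; rewrite cents_norm // centsC (subset_trans sAN). Qed.

Lemma core_free_mulg : N * M = G.
Proof.
apply: mulg_norm_maximal => //; apply: contra ntN => sNM.
by rewrite -subG1 -coreM gcore_max.
Qed.

Lemma core_free_trivg (A : {group gT}) :
  A \subset M -> N \subset 'N(A) -> M \subset 'N(A) -> A :=: 1.
Proof.
move=> sAM nAN nAM; apply/trivgP; rewrite -coreM gcore_max //.
by rewrite -core_free_mulg mul_subG.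
Qed.

Lemma core_free_TI : N :&: M = 1.
Proof. by apply: core_free_trivg; rewrite ?subsetIr ?sub_norm ?subsetIl ?normsI ?normG. Qed.

Lemma core_free_cent : 'C_M(N) = 1.
Proof.
apply: core_free_trivg (subsetIl _ _) _ _.
  by rewrite cents_norm // centsC subsetIr.
by rewrite normsI ?normG ?norms_cent.
Qed.

Lemma cent1_minnormal_trivg (A : {group gT}) v :
  A \subset M -> M \subset 'N(A) -> v \in N^# -> A \subset 'C[v] -> A :=: 1.
Proof.
move=> sAM nAM /setD1P[ntv Nv] cAv.
have nCG : G \subset 'N('C_N(A)).
  by rewrite -core_free_mulg mul_subG ?sub_norm ?subsetIl // normsI ?norms_cent.
have ntC : 'C_N(A) != 1 by apply/trivgPn; exists v; rewrite // inE Nv -sub_cent1.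
have defC : 'C_N(A) :=: N.
  by case/mingroupP: minN => _; apply; rewrite ?ntC ?subsetIl.
by apply/trivgP; rewrite -core_free_cent subsetI sAM centsC -defC subsetIr.
Qed.

(* For x in M, x lies in M :^ w^-1 iff [~ x, w] does, and [~ x, w] is in N. *)
Lemma core_free_setI_conjV w : w \in N -> M :&: M :^ w^-1 = 'C_M[w].
Proof.
move=> Nw; apply/setP=> x; rewrite !in_setI mem_conjgV.
have [Mx | //] := boolP (x \in M); rewrite conjg_mulR groupMl //=.
have Nxw : [~ x, w] \in N.
  by rewrite commgEr groupM ?groupV // memJ_norm ?groupV // (subsetP nNM).
apply/idP/cent1P=> [Mxw | /commgP/eqP->]; last exact: group1.
have : [~ x, w] \in N :&: M by rewrite inE Nxw.
by rewrite core_free_TI => /set1P/eqP/commgP.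
Qed.

Lemma core_free_setI_joing (K : {group gT}) : K \subset M -> M :&: (N <*> K) = K.
Proof.
move=> sKM; rewrite norm_joinEr ?(subset_trans sKM nNM) //.
by rewrite -group_modr // setIC core_free_TI mul1g.
Qed.

Lemma maximal_joing_core_free (K : {group gT}) : maximal K M -> maximal (N <*> K) G.
Proof.
move=> maxK; have pKM := maxgroupp maxK; have sKM := proper_sub pKM.
apply/maxgroupP; split.
  rewrite properEneq join_subG sNG (subset_trans sKM sMG) !andbT.
  apply: contraTneq pKM => defG.
  by rewrite -(core_free_setI_joing sKM) defG (setIidPl sMG) properxx.
move=> H pHG sNKH; have sHG := proper_sub pHG.
have sNH : N \subset H := subset_trans (joing_subl N K) sNKH.
have defH : N * (M :&: H) = H.
  by rewrite group_modl // core_free_mulg (setIidPr sHG).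
have [defMH | pMH] := eqVproper (subsetIl M H).
  by move: pHG; rewrite -defH defMH core_free_mulg properxx.
have sKMH : K \subset M :&: H by rewrite subsetI sKM (subset_trans (joing_subr N K)).
case/maxgroupP: maxK => _ /(_ (M :&: H)%G pMH sKMH) defK.
by apply: val_inj; rewrite /= -defH defK norm_joinEr ?(subset_trans sKM nNM).
Qed.

(* A maximal subgroup K of M properly containing C_M[w] = M :&: M :^ w^-1
   would be the maximal intersection M :&: (N <*> K). *)
Lemma MaxInt_alpha_cent1_maximal : MaxInt G = alpha G -> M :!=: 1 ->
  {in N^#, forall w, maximal 'C_M[w] M}.
Proof.
move=> MaxInt_alpha ntM w N1w; have /setD1P[_ Nw] := N1w.
have maxMw : maximal (M :^ w^-1)%G G.
  by rewrite -(conjGid (groupVr (subsetP sNG w Nw))) maximalJ.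
have [defC | [K maxK sCK]] := maximal_exists (subsetIl M 'C[w]).
  case/eqP: ntM; apply: (cent1_minnormal_trivg _ _ N1w); rewrite ?normG //.
  by rewrite -defC subsetIr.
have [-> // | pCK] := eqVproper sCK.
have MIK : (K : {set gT}) \in MI G.
  rewrite -(core_free_setI_joing (proper_sub (maxgroupp maxK))).
  exact: MI_setI_maximal (maximal_MI maxM) (maximal_joing_core_free maxK).
case: (MaxInt_alpha_no_refinement MaxInt_alpha maxM maxMw MIK _ (maxgroupp maxK)).
by rewrite core_free_setI_conjV.
Qed.

Section SelfCentralizingChiefFactor.
Hypothesis cent1_max : {in N^#, forall w, maximal 'C_M[w] M}.
Variable F : {group gT}.
Hypotheses (minF : minnormal F M) (sFM : F \subset M) (abF : abelian F).

Let nFM : M \subset 'N(F). Proof. by case/mingroupp/andP: minF. Qed.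
Let ntF : F :!=: 1. Proof. by case/mingroupp/andP: minF. Qed.

Lemma minnormal_cent1_complement w :
  w \in N^# -> F * 'C_M[w] = M /\ F :&: 'C_M[w] = 1.
Proof.
move=> N1w; have sCM := subsetIl M 'C[w]; have nFC := subset_trans sCM nFM.
have notsFC : ~~ (F \subset 'C_M[w]).
  apply: contra ntF => sFC; apply/eqP/(cent1_minnormal_trivg sFM nFM N1w).
  exact: subset_trans sFC (subsetIr _ _).
have defM := mulg_norm_maximal (cent1_max N1w) sFM nFC notsFC.
split=> //; apply: (cent1_minnormal_trivg _ _ N1w).
- by rewrite subIset ?sFM.
- rewrite -{1}defM mul_subG ?(normsI nFC (normG _)) //.
  by rewrite cents_norm // centsC (subset_trans (subsetIl F _)).
- exact: subset_trans (subsetIr _ _) (subsetIr _ _).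
Qed.

(* F acts faithfully on an F-irreducible U <= N: C_F(U) <= F :&: C_M[u] = 1. *)
Lemma minnormal_cyclic : cyclic F.
Proof.
have [U minU sUN] := minnormal_exists ntN (subset_trans sFM nNM).
have /andP[ntU nUF] := mingroupp minU.
apply: (abelian_faithful_irr_cyclic (abelemS sUN abelN) ntU nUF minU _ abF).
have [u Uu ntu] := trivgPn _ ntU.
have N1u : u \in N^# by rewrite !inE ntu (subsetP sUN).
have [_ tiFC] := minnormal_cent1_complement N1u.
apply/trivgP; rewrite -tiFC !subsetI subsetIl (subset_trans (subsetIl _ _) sFM).
by apply/subIset/orP; right; rewrite -cent_set1 centS // sub1set.
Qed.

Lemma minnormal_self_cent : 'C_M(F) = F.
Proof.
have [v Nv ntv] := trivgPn _ ntN.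
have N1v : v \in N^# by rewrite !inE ntv.
have [defM _] := minnormal_cent1_complement N1v.
have sCM := subsetIl M 'C[v].
have cCF1 : 'C_('C_M[v])(F) = 1.
  apply: (cent1_minnormal_trivg _ _ N1v).
  - by rewrite subIset ?sCM.
  - rewrite -{1}defM mul_subG ?(normsI (normG _) (norms_cent (subset_trans sCM nFM))) //.
    by rewrite cents_norm // centsC subsetIr.
  - exact: subset_trans (subsetIl _ _) (subsetIr _ _).
by rewrite -{1}defM -group_modl // cCF1 mulg1.
Qed.

Lemma der1_sub_minnormal : M^`(1) \subset F.
Proof.
by rewrite -minnormal_self_cent subsetI der_sub der1_norm_cyclic_cent ?minnormal_cyclic.
Qed.

End SelfCentralizingChiefFactor.

Lemma cent1_maximal_der2 : (M :!=: 1 -> {in N^#, forall w, maximal 'C_M[w] M}) ->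
  solvable M -> M^`(2) = 1.
Proof.
move=> cent1_max solM; have [M1 | ntM] := eqsVneq M 1.
  by apply/trivgP; rewrite -M1 der_sub.
have [F minF sFM] := minnormal_exists ntM (normG M).
have [_ _ /is_abelemP[q _ /abelem_abelian abF]] := minnormal_solvable minF sFM solM.
apply/trivgP; rewrite -(derG1P abF); apply: (dergS 1).
exact: (der1_sub_minnormal (cent1_max ntM) minF sFM abF).
Qed.

Lemma core_free_minnormal_der3 : solvable G -> MaxInt G = alpha G -> G^`(3) = 1.
Proof.
move=> solG MaxInt_alpha.
have derM2 := cent1_maximal_der2 (MaxInt_alpha_cent1_maximal MaxInt_alpha)
  (solvableS sMG solG).
have sG2N : G^`(2) \subset N.
  rewrite -quotient_sub1 ?(subset_trans (der_sub 2 G) nNG) // quotient_der //.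
  by rewrite -core_free_mulg quotientMidl -quotient_der // derM2 quotient1.
by apply/trivgP; rewrite (subset_trans (dergS 1 sG2N)) // (derG1P abN).
Qed.

End CoreFreeMaximal.

Theorem mainTheorem9 (gT : finGroupType) (G : {group gT}) :
  primitive_group G -> monolithic G -> solvable G -> weakly_minmax G ->
  G^`(3) = 1.
Proof.
move=> /existsP[M /andP[maxM /eqP coreM]] [N [/andP[minN sNG] _]] solG [_ MaxInt_alpha].
have [_ _ /is_abelemP[p _ abelN]] := minnormal_solvable minN sNG solG.
exact: core_free_minnormal_der3 maxM coreM minN sNG abelN solG MaxInt_alpha.
Qed.
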